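(* Let $k\ge 3$ and let $w$ be a word over $\{a,b\}$. Let $p$ and $q$ be two consecutive occurrences of $u=ba^{k-1}$ in $w$ ($p$ before $q$), with sets of forbidden local positions $F_p$ and $F_q$. If $F_q=\{0,i,i+1,\dots,k-1\}$ for some $1\le i\le k-1$ and $|F_p|=|F_q|$, then $F_p=F_q$.
   Context: $\Sigma=\{a,b\}$. $S_k=\left(\Sigma^k\setminus\{ba^{k-1},b^{k-1}a\}\right)\cup\left(\Sigma^{k-1}\setminus\{a^{k-1},b^{k-1}\}\right)$, $u=ba^{k-1}$, $v=b^{k-1}a$. $\mathit{Pref}(S^* )$ denotes the set of prefixes of words in $S^*$. For $w=w_1\cdots w_n$, $w[i..j]=w_i\cdots w_j$ (empty if $i>j$). A position $j$, $0\le j\le n-1$, is forbidden in $w$ if $w[j+1..n]\notin\mathit{Pref}(S_k^* )$. An occurrence of $p\in\{u,v\}$ in $w$ is an index $s$ with $w[s+1..s+k]=p$; local position $i\in\{0,\dots,k-1\}$ is the position $s+i$ of $w$, and it is forbidden in the occurrence if $s+i$ is forbidden in $w$. Two occurrences of words from $\{u,v\}$ starting at $s<t$ overlap if $t<s+k$; they are consecutive if either they overlap or they are the only occurrences of $u$ or $v$ lying inside the factor $w[s+1..t+k]$. *)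

From mathcomp Require Import all_boot.
From Stdlib Require Import ClassicalEpsilon.
Set Implicit Arguments. Unset Strict Implicit. Unset Printing Implicit Defensive.

Definition la : bool := false.
Definition lb : bool := true.

Definition uw (k : nat) : seq bool := lb :: nseq k.-1 la.
Definition vw (k : nat) : seq bool := rcons (nseq k.-1 lb) la.

Definition inS (k : nat) (x : seq bool) : bool :=
  [&& size x == k, x != uw k & x != vw k] ||
  [&& size x == k.-1, x != nseq k.-1 la & x != nseq k.-1 lb].

Definition inSstar (k : nat) (x : seq bool) : Prop :=
  exists ws : seq (seq bool), all (inS k) ws /\ flatten ws = x.

Definition inPrefSstar (k : nat) (x : seq bool) : Prop :=
  exists y : seq bool, inSstar k (x ++ y).

(* Position j (0 <= j <= n-1) is forbidden in w iff w[j+1..n] = drop j w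
   is not in Pref(S_k^* ). *)
Definition forbidden (k : nat) (w : seq bool) (j : nat) : Prop :=
  j < size w /\ ~ inPrefSstar k (drop j w).

Definition toBool (P : Prop) : bool :=
  if excluded_middle_informative P then true else false.

(* an occurrence of p in w starting at s: w[s+1..s+k] = p *)
Definition occ (k : nat) (p w : seq bool) (s : nat) : Prop :=
  s + k <= size w /\ take k (drop s w) = p.

Definition Floc (k : nat) (w : seq bool) (s : nat) : {set 'I_k} :=
  [set i : 'I_k | toBool (forbidden k w (s + i))].

Definition consecutive (k : nat) (w : seq bool) (s t : nat) : Prop :=
  s < t /\
  (t < s + k \/
   forall r, s <= r -> r + k <= t + k -> r <> s -> r <> t ->
     ~ occ k (uw k) w r /\ ~ occ k (vw k) w r).

From mathcomp Require Import all_boot zify.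
From Stdlib Require Import ClassicalEpsilon.
Set Implicit Arguments. Unset Strict Implicit. Unset Printing Implicit Defensive.

(* Call a position j of w allowed when w[j+1..n] is in Pref(S_k^* ), so the
   forbidden positions are the non-allowed ones.  A word of length >= k is in
   Pref(S_k^* ) iff it starts with a factor of S_k (of length k or k - 1)
   followed by a word of Pref(S_k^* ).  For h x := "s + x is allowed" this gives
     h j = h (j + k) || (short_in j && h (j + k - 1))
   at every position strictly between the occurrences s and t, where the
   length-k factor is neither u nor v; at s itself u is not in S_k, so
   h 0 = h (k - 1).

   The number of
   forbidden positions in a sliding window of length k never decreases between
   s and t, and grows exactly at a "drop" j (h j but not h (j + k)).  If
   F_t = {0} U [i, k) with i >= 2, then j0 = t - k + i is a drop; equal
   cardinalities of F_s and F_t leave no room for any other drop, so h is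
   k-periodic apart from j0, which pins down the first window.  If i = 1, every
   position is forbidden.  Section ConsecutiveOccurrences derives the
   hypotheses of that abstract lemma from the word, and lemma5 follows. *)

Section WindowCount.
Variables (k : nat) (h : nat -> bool).

Definition window_count (j : nat) : nat := \sum_(x < k) (~~ h (j + x) : nat).

Lemma window_count_slide (j : nat) :
  window_count j + ~~ h (j + k) = ~~ h j + window_count j.+1.
Proof.
rewrite /window_count.
have /= <- := big_ord_recr k (fun x : 'I_k.+1 => (~~ h (j + x) : nat)).
rewrite big_ord_recl /= addn0; congr (_ + _).
by apply: eq_bigr => x _; rewrite addSnnS.
Qed.

End WindowCount.

Section ForbiddenPattern.
(* h x stands for "position s + x is allowed", D = t - s, and short_in j for
   "the factor of length k - 1 at s + j lies in S_k". *)
Variables (k D i : nat) (h short_in : nat -> bool).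
Hypotheses (k_ge3 : 3 <= k) (k_le_D : k <= D) (i_gt0 : 0 < i) (i_lt_k : i < k).
Hypothesis h_rec :
  forall j, 0 < j -> j < D -> h j = h (j + k) || (short_in j && h (j + k.-1)).
Hypothesis h_start : h 0 = h k.-1.
Hypothesis h_end : forall m, m < k -> ~~ h (D + m) = (m == 0) || (i <= m).

Lemma nothing_allowed : i = 1 -> forall j, j < D + k -> h j = false.
Proof.
move=> i1.
have inner : forall n j, D + k - j <= n -> 0 < j -> j < D + k -> h j = false.
  elim=> [|n IH] j jn j_gt0 j_lt; first lia.
  case: (ltnP j D) => jD.
    by rewrite h_rec // (IH (j + k)) 1?(IH (j + k.-1)) ?andbF; lia.
  have := h_end (m := j - D) ltac:(lia).
  rewrite (_ : D + (j - D) = j); last lia.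
  by case: (h j) => //=; lia.
move=> j j_lt; case: (posnP j) => [->|j_gt0].
  by rewrite h_start (inner (D + k)); lia.
by apply: (inner (D + k)); lia.
Qed.

Local Notation c := (window_count k h).

(* Allowedness propagates backwards by k, so the window count never
   decreases; it increases exactly at a "drop" j: h j but not h (j + k). *)
Lemma window_count_step (j : nat) : 0 < j -> j < D ->
  c j.+1 = c j + (h j && ~~ h (j + k)).
Proof.
move=> j_gt0 j_lt; have := window_count_slide k h j.
have := h_rec j_gt0 j_lt.
by case: (h j); case: (h (j + k)) => //= _; lia.
Qed.

Lemma window_count_mono (a b : nat) : 0 < a -> a <= b -> b <= D -> c a <= c b.
Proof.
move=> a_gt0 /subnKC <-; elim: (b - a) => [|n IH] bD; first by rewrite addn0.
by rewrite addnS window_count_step; lia.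
Qed.

Section SecondCase.
Hypothesis i_ge2 : 2 <= i.
Hypothesis short_in_j0 : short_in (D - k + i).
Hypothesis same_count : c 0 = c D.

Local Notation j0 := (D - k + i).

(* j0 = D - k + i is a drop: its long factor leads to a forbidden position,
   but its short factor leads to the allowed position D + i - 1. *)
Lemma drop_at_j0 : h j0 /\ ~~ h (j0 + k).
Proof.
have -> : j0 + k = D + i by lia.
split; last by rewrite h_end ?leqnn ?orbT.
rewrite h_rec; try lia.
have -> : j0 + k.-1 = D + i.-1 by lia.
have := h_end (m := i.-1) ltac:(lia).
rewrite (_ : (i.-1 == 0) || (i <= i.-1) = false); last lia.
by move/negbFE => ->; rewrite short_in_j0 orbT.
Qed.

(* Comparing the first two windows with the equal counts forces the shape of
   the first window's end and leaves room for only one drop. *)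
Lemma first_window : [/\ h k, ~~ h k.-1 & (c 1).+1 = c D].
Proof.
have [hj0 nhj0] := drop_at_j0.
have lo : c 1 <= c j0 by apply: window_count_mono; lia.
have hi : c j0.+1 <= c D by apply: window_count_mono; lia.
have := window_count_step (j := j0) ltac:(lia) ltac:(lia).
rewrite hj0 nhj0 /= => step.
have := window_count_slide k h 0; rewrite add0n h_start same_count.
by case: (h k); case: (h k.-1) => /= E; try lia; split => //; lia.
Qed.

Lemma two_drops (j j' : nat) : 0 < j -> j < j' -> j' < D ->
  h j && ~~ h (j + k) -> h j' && ~~ h (j' + k) -> (c 1).+2 <= c D.
Proof.
move=> j_gt0 jj' j'D drop_j drop_j'.
have := window_count_step (j := j) j_gt0 ltac:(lia); rewrite drop_j /=.
have := window_count_step (j := j') ltac:(lia) j'D; rewrite drop_j' /=.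
have := window_count_mono (a := 1) (b := j) isT ltac:(lia) ltac:(lia).
have := window_count_mono (a := j.+1) (b := j') isT ltac:(lia) ltac:(lia).
have := window_count_mono (a := j'.+1) (b := D) isT ltac:(lia) ltac:(lia).
lia.
Qed.

Lemma no_other_drop (j : nat) : 0 < j -> j < D -> j != j0 -> h j = h (j + k).
Proof.
move=> j_gt0 j_lt j_ne; have [_ _ c1D] := first_window.
have [hj0 nhj0] := drop_at_j0.
case E: (h (j + k)); first by rewrite h_rec // E.
apply/negbTE/negP => hj.
have drop_j : h j && ~~ h (j + k) by rewrite hj E.
have drop_j0 : h j0 && ~~ h (j0 + k) by rewrite hj0 nhj0.
case: (ltngtP j j0) => [jj|jj|jj]; last by rewrite jj eqxx in j_ne.
- by have := two_drops j_gt0 jj ltac:(lia) drop_j drop_j0; lia.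
- by have := two_drops (j := j0) ltac:(lia) jj j_lt drop_j0 drop_j; lia.
Qed.

(* Walking down from the last window in steps of k, values are copied except
   across the single drop at j0 = D + i - k. *)
Lemma chain_values (q r : nat) : r < k -> q * k < D + r ->
  h (D + r - q * k) = (0 < r < i) || ((r == i) && (0 < q)).
Proof.
elim: q r => [|q IH] r r_lt qk.
  rewrite mul0n subn0; have := h_end r_lt.
  by case: (h (D + r)) => /=; lia.
have [hj0 _] := drop_at_j0.
have [/eqP E|ne] := boolP (D + r - q.+1 * k == j0).
  rewrite E.
  have [-> ->] : r = i /\ q = 0.
    have : q = 0 \/ k <= q * k.
      by case: (q) => [|q']; [left | right; rewrite mulSn leq_addr].
    by move: E qk; rewrite mulSn; lia.
  by rewrite hj0 eqxx orbT.
rewrite no_other_drop //; try lia.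
rewrite (_ : D + r - q.+1 * k + k = D + r - q * k); last lia.
by rewrite IH; lia.
Qed.

Lemma pattern_second_case (m : nat) : m < k -> ~~ h m = (m == 0) || (i <= m).
Proof.
move=> m_lt; have [hk nhk1 _] := first_window.
case: (posnP m) => [->|m_gt0]; first by rewrite h_start nhk1.
pose q := D.-1 %/ k.
have q_lo : q * k <= D.-1 by apply: leq_divM.
have q_hi : D.-1 < q.+1 * k by apply: ltn_ceil; lia.
pose r := q * k + k - D.
have at_k := chain_values (q := q) (r := r) ltac:(lia) ltac:(lia).
rewrite (_ : D + r - q * k = k) in at_k; last lia.
have at_k1 := chain_values (q := q) (r := r.-1) ltac:(lia) ltac:(lia).
rewrite (_ : D + r.-1 - q * k = k.-1) in at_k1; last lia.
have r1 : r = 1 by move: at_k at_k1; rewrite hk (negbTE nhk1); lia.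
case: (ltnP m k.-1) => mk; last first.
  have -> : m = k.-1 by lia.
  by rewrite nhk1; lia.
have := chain_values (q := q.+1) (r := m.+1) ltac:(lia) ltac:(lia).
by rewrite (_ : D + m.+1 - q.+1 * k = m); lia.
Qed.

End SecondCase.

Lemma forbidden_pattern :
  (2 <= i -> short_in (D - k + i)) -> c 0 = c D ->
  forall m, m < k -> ~~ h m = (m == 0) || (i <= m).
Proof.
move=> short_in_j0 same_count m m_lt.
case: (ltnP i 2) => [i1|i2].
  by rewrite nothing_allowed //; lia.
by apply: pattern_second_case => //; apply: short_in_j0.
Qed.

End ForbiddenPattern.

Lemma toBoolP (P : Prop) : reflect P (toBool P).
Proof. by rewrite /toBool; case: excluded_middle_informative => H; constructor. Qed.

Definition allowed (k : nat) (w : seq bool) (j : nat) : bool :=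
  toBool (inPrefSstar k (drop j w)).

Lemma forbidden_allowed (k : nat) (w : seq bool) (j : nat) :
  j < size w -> toBool (forbidden k w j) = ~~ allowed k w j.
Proof.
move=> j_lt; rewrite /forbidden /allowed.
by case: toBoolP; case: toBoolP => //=; tauto.
Qed.

Lemma Floc_allowed (k : nat) (w : seq bool) (r : nat) :
  r + k <= size w -> Floc k w r = [set x : 'I_k | ~~ allowed k w (r + x)].
Proof.
move=> rk; apply/setP => x; rewrite !inE forbidden_allowed //.
by have := ltn_ord x; lia.
Qed.

Lemma card_Floc_allowed (k : nat) (w : seq bool) (r : nat) :
  r + k <= size w -> #|Floc k w r| = \sum_(x < k) (~~ allowed k w (r + x) : nat).
Proof.
move=> rk; rewrite Floc_allowed // -sum1_card big_mkcond /=.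
by apply: eq_bigr => x _; rewrite inE; case: (~~ _).
Qed.

Lemma inPrefSstar_cons (k : nat) (x : seq bool) : 0 < k -> k <= size x ->
  inPrefSstar k x <->
  (inS k (take k x) /\ inPrefSstar k (drop k x)) \/
  (inS k (take k.-1 x) /\ inPrefSstar k (drop k.-1 x)).
Proof.
move=> k_gt0 kx; split.
  case=> y [[|z ws] [/= all_in fl]].
    by move: fl => /(congr1 size); rewrite size_cat /=; lia.
  case/andP: all_in => z_in ws_in.
  have z_size : size z = k \/ size z = k.-1.
    by case/orP: z_in => /and3P[/eqP -> _ _]; [left | right].
  have z_le : size z <= size x by case: z_size => ->; lia.
  move/eqP: fl; rewrite -{1}(cat_take_drop (size z) x) -catA.
  rewrite eqseq_cat; last by rewrite size_takel.
  case/andP=> /eqP z_pref /eqP rest.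
  have rest_in : inPrefSstar k (drop (size z) x) by exists y, ws; rewrite rest.
  by case: z_size => z_size; rewrite z_size in z_pref rest_in;
    [left | right]; rewrite -z_pref; split.
case=> [[z_in [y [ws [ws_in fl]]]]|[z_in [y [ws [ws_in fl]]]]].
  exists y, (take k x :: ws).
  by rewrite /= z_in ws_in fl catA cat_take_drop.
exists y, (take k.-1 x :: ws).
by rewrite /= z_in ws_in fl catA cat_take_drop.
Qed.

Lemma allowed_rec (k : nat) (w : seq bool) (j : nat) : 0 < k -> j + k <= size w ->
  allowed k w j =
  (inS k (take k (drop j w)) && allowed k w (j + k)) ||
  (inS k (take k.-1 (drop j w)) && allowed k w (j + k.-1)).
Proof.
move=> k_gt0 jk; rewrite /allowed (addnC j) (addnC j) -!drop_drop.
have len : k <= size (drop j w) by rewrite size_drop; lia.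
apply/toBoolP/idP => [/(inPrefSstar_cons k_gt0 len) | factor].
- by case=> -[z_in /toBoolP rest]; rewrite z_in rest ?orbT.
- apply/(inPrefSstar_cons k_gt0 len).
  by case/orP: factor => /andP[z_in /toBoolP rest]; [left | right].
Qed.

Lemma nth_factor (w : seq bool) (r n m : nat) :
  m < n -> nth la (take n (drop r w)) m = nth la w (r + m).
Proof. by move=> m_lt; rewrite nth_take // nth_drop. Qed.

Lemma occ_u_letter (k : nat) (w : seq bool) (r m : nat) :
  occ k (uw k) w r -> m < k -> nth la w (r + m) = (m == 0).
Proof.
case=> _ fac m_lt; rewrite -(nth_factor _ _ m_lt) fac.
by case: m m_lt => [|m] m_lt //; rewrite /uw /= nth_nseq if_same.
Qed.

(* Two occurrences of u cannot overlap: the first letter of the later one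
   would be an a of the earlier one. *)
Lemma occ_u_apart (k : nat) (w : seq bool) (s t : nat) :
  occ k (uw k) w s -> occ k (uw k) w t -> s < t -> s + k <= t.
Proof.
move=> occ_s occ_t s_lt; rewrite leqNgt; apply/negP => overlap.
have := occ_u_letter occ_t (m := 0) ltac:(lia); rewrite addn0 => at_t.
have := occ_u_letter occ_s (m := t - s) ltac:(lia).
by rewrite (_ : s + (t - s) = t) ?at_t; lia.
Qed.

Lemma inS_short (k : nat) (w : seq bool) (r : nat) : 0 < k -> r + k.-1 <= size w ->
  inS k (take k.-1 (drop r w)) =
  (take k.-1 (drop r w) != nseq k.-1 la) && (take k.-1 (drop r w) != nseq k.-1 lb).
Proof.
move=> k_gt0 len; rewrite /inS size_takel ?size_drop; last lia.
by rewrite eqxx (_ : (k.-1 == k) = false) //; lia.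
Qed.

Lemma factor_ne_nseq (w : seq bool) (r n m : nat) (c : bool) :
  m < n -> nth la w (r + m) != c -> take n (drop r w) != nseq n c.
Proof.
move=> m_lt ne; apply/eqP => fac; move: ne.
by rewrite -(nth_factor _ _ m_lt) fac nth_nseq m_lt eqxx.
Qed.

(* At an occurrence of u the only way to continue is through its prefix
   b a^(k-2), which lies in S_k, while u itself does not. *)
Lemma allowed_at_u (k : nat) (w : seq bool) (r : nat) : 3 <= k ->
  occ k (uw k) w r -> allowed k w r = allowed k w (r + k.-1).
Proof.
move=> k_ge3 occ_r; have [len fac] := occ_r.
have u_notin : inS k (uw k) = false.
  by rewrite /inS eqxx /= andbF size_nseq; apply/negbTE; lia.
have w0 : nth la w (r + 0) = lb by rewrite (occ_u_letter occ_r) //; lia.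
have w1 : nth la w (r + 1) = la by rewrite (occ_u_letter occ_r) //; lia.
rewrite allowed_rec ?fac ?u_notin ?inS_short //=; try lia.
by rewrite (factor_ne_nseq (m := 0)) ?(factor_ne_nseq (m := 1)) ?w0 ?w1; try lia.
Qed.

Section ConsecutiveOccurrences.
Variables (k : nat) (w : seq bool) (s t : nat).
Hypotheses (k_ge3 : 3 <= k) (occ_s : occ k (uw k) w s) (occ_t : occ k (uw k) w t).
Hypothesis s_apart : s + k <= t.
Hypothesis no_occ_between : forall r, s <= r -> r + k <= t + k -> r <> s -> r <> t ->
  ~ occ k (uw k) w r /\ ~ occ k (vw k) w r.

Let t_len : t + k <= size w. Proof. by case: occ_t. Qed.

Lemma window_between_inS (r : nat) : s < r -> r < t -> inS k (take k (drop r w)).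
Proof.
move=> s_lt r_lt; have len := t_len.
have [not_u not_v] := no_occ_between (r := r) ltac:(lia) ltac:(lia) ltac:(lia) ltac:(lia).
apply/orP; left; rewrite size_takel ?size_drop; last lia.
rewrite eqxx /=; apply/andP; split; apply/eqP => fac.
- by apply: not_u; split; first lia.
- by apply: not_v; split; first lia.
Qed.

(* For i >= 2 the factor of length k - 1 starting at r = t - k + i contains
   the b at t, and an a: at t + 1 if i >= 3; if i = 2 it would otherwise be
   b^(k-1), followed by the a at t + 1, an occurrence of v between s and t. *)
Lemma short_window_before_t (i r : nat) : 2 <= i -> i < k -> r + k = t + i ->
  inS k (take k.-1 (drop r w)).
Proof.
move=> i_ge2 i_lt r_def; have len := t_len.
rewrite inS_short; try lia.
have w_t : nth la w (r + (k - i)) = lb.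
  by rewrite (_ : r + (k - i) = t + 0) ?(occ_u_letter occ_t) //; lia.
rewrite (factor_ne_nseq (m := k - i)) ?w_t //=; last lia.
case: (ltnP 2 i) => i_ge3.
  rewrite (factor_ne_nseq (m := k - i + 1)) //; first lia.
  by rewrite (_ : r + (k - i + 1) = t + 1) ?(occ_u_letter occ_t) //; lia.
have w_t1 : nth la w (r + k.-1) = la.
  by rewrite (_ : r + k.-1 = t + 1) ?(occ_u_letter occ_t) //; lia.
apply/eqP => fac.
have [_ not_v] := no_occ_between (r := r) ltac:(lia) ltac:(lia) ltac:(lia) ltac:(lia).
apply: not_v; split; first lia.
have -> : take k (drop r w) = take k.-1.+1 (drop r w) by rewrite prednK //; lia.
rewrite (take_nth la) ?size_drop; last lia.
by rewrite fac nth_drop w_t1.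
Qed.

Lemma forbidden_at_s (i : nat) : 1 <= i <= k.-1 ->
  Floc k w t = [set j : 'I_k | (val j == 0) || (i <= val j)] ->
  #|Floc k w s| = #|Floc k w t| ->
  forall m, m < k -> ~~ allowed k w (s + m) = (m == 0) || (i <= m).
Proof.
move=> /andP[i_gt0 i_lt] Ft same_card.
have shift x : s + (t - s + x) = t + x by lia.
apply: (@forbidden_pattern k (t - s) i (fun x => allowed k w (s + x))
          (fun x => inS k (take k.-1 (drop (s + x) w)))); try lia.
- move=> j j_gt0 j_lt /=; rewrite allowed_rec; try lia.
  by rewrite window_between_inS ?addnA //; lia.
- by rewrite /= addn0 allowed_at_u.
- move=> m m_lt /=; have := congr1 (fun S : {set 'I_k} => Ordinal m_lt \in S) Ft.
  by rewrite Floc_allowed // !inE /= shift.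
- by move=> i_ge2 /=; apply: (short_window_before_t i_ge2); lia.
- move: same_card; rewrite !card_Floc_allowed; try lia.
  move=> same_card; rewrite /window_count.
  under [RHS]eq_bigr do rewrite shift.
  by rewrite -same_card; apply: eq_bigr => x _; rewrite add0n.
Qed.

End ConsecutiveOccurrences.

Theorem lemma5 (k : nat) (w : seq bool) (s t : nat) (i : nat) :
  3 <= k ->
  occ k (uw k) w s -> occ k (uw k) w t ->
  consecutive k w s t ->
  1 <= i <= k.-1 ->
  Floc k w t = [set j : 'I_k | (val j == 0) || (i <= val j)] ->
  #|Floc k w s| = #|Floc k w t| ->
  Floc k w s = Floc k w t.
Proof.
move=> k_ge3 occ_s occ_t [s_lt_t between] i_range Ft same_card.
(* occurrences of u cannot overlap, so consecutiveness means that no other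
   occurrence of u or v starts between them *)
have s_apart := occ_u_apart occ_s occ_t s_lt_t.
have {}between : forall r, s <= r -> r + k <= t + k -> r <> s -> r <> t ->
    ~ occ k (uw k) w r /\ ~ occ k (vw k) w r.
  by case: between => // overlap; lia.
have s_len : s + k <= size w by case: occ_s.
apply/setP => x; rewrite Ft Floc_allowed // !inE.
exact: (forbidden_at_s k_ge3 occ_s occ_t s_apart between i_range Ft same_card
          (ltn_ord x)).
Qed.
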